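(* Let $\varphi$ be an individually rational rule. There exists a pick-an-object mechanism (i.e. a menu function $\mathbb{S}$) that sequentializes $\varphi$ if and only if $\varphi$ satisfies monotonic discoverability.
   Context: Let $A=\{a_1,\dots,a_n\}$ be a finite set of agents and $O=\{o_1,\dots,o_m\}\cup\{\emptyset\}$ a finite set of object types, where $\emptyset$ is the null object. Each agent $a$ has a strict preference $P_a$ (a linear order) over $O$, with weak version $R_a$ ($oR_ao'$ iff $oP_ao'$ or $o=o'$). $\mathbb{P}$ is the set of strict preferences over $O$, $\mathcal{P}=\mathbb{P}^n$ the set of preference profiles $P=(P_{a_1},\dots,P_{a_n})$. An allocation is any function $\mu:A\to O$; $\mathcal{M}$ is the set of allocations. A rule is a function $\varphi:\mathcal{P}\to\mathcal{M}$, with $\varphi_a(P)=\varphi(P)(a)$. $\varphi$ is individually rational if $\varphi_a(P)\,R_a\,\emptyset$ for all $P\in\mathcal{P}$, $a\in A$. Lower contour set: for $P\in\mathcal{P}$ and an allocation $\mu$, $\mathcal{L}(P,\mu)$ is the set of profiles $P'\in\mathcal{P}$ such that, for every agent $a$, $P'_a$ agrees with $P_a$ on $\mu(a)$ and on all objects that $P_a$ ranks above $\mu(a)$ (the same objects are ranked above $\mu(a)$, in the same order), while $P'_a$ may differ arbitrarily on objects ranked below $\mu(a)$ by $P_a$. A rule $\varphi$ satisfies monotonic discoverability if for every allocation $\mu$ and every $P\in\mathcal{P}$, either $\varphi(P)=\mu$, or there is an agent $a^*\in A$ such that $\varphi_{a^*}(P')\neq\mu(a^* )$ for all $P'\in\mathcal{L}(P,\mu)$.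 Pick-an-object mechanisms: a choice history is a finite (possibly empty) sequence $h=((\Omega_1,\omega_1),\dots,(\Omega_k,\omega_k))$ with $\Omega_j\subseteq O$ and $\omega_j\in\Omega_j$; its last choice is $\omega_k$. A preference $P_a$ is consistent with $h$ if $\omega_j R_a o$ for all $j$ and all $o\in\Omega_j$. A collective history $h^A=(h_1,\dots,h_n)$ is an $n$-tuple of choice histories (one per agent); $h^{A-\emptyset}$ denotes the tuple of empty histories. A menu function $\mathbb{S}$ assigns to each collective history an $n$-tuple of subsets of $O$ (menus) such that all menus in $\mathbb{S}(h^{A-\emptyset})$ are non-empty, and for any other collective history $h^A$ in which agent $i$'s history ends with $(\Omega_k,\omega_k)$, agent $i$'s menu is a subset of $\Omega_k\setminus\{\omega_k\}$. The pick-an-object mechanism $\mathbb{S}$ runs as follows: in period 1 every agent chooses one element from her menu in $\mathbb{S}(h^{A-\emptyset})$, and (menu, choice) is appended to her history. In each period $t>1$, with current collective history $h^A$, if every menu in $\mathbb{S}(h^A)$ is empty the procedure stops and each agent is assigned the last object she chose; otherwise each agent with a non-empty menu chooses one element of it and (menu, choice) is appended to her history, while agents with empty menus make no choice. An agent follows the straightforward strategy with respect to $P_a$ if whenever presented with a menu she chooses its $P_a$-most-preferred element. $\mathbb{S}$ sequentializes $\varphi$ if for every $P\in\mathcal{P}$, when every agent $a$ follows the straightforward strategy with respect to $P_a$, the mechanism outputs $\varphi(P)$. *)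

From mathcomp Require Import all_boot.
Set Implicit Arguments. Unset Strict Implicit. Unset Printing Implicit Defensive.

(* A strict preference (linear order) over O is represented canonically as the
   list of all objects, from most preferred to least preferred. *)
Definition pref (O : finType) := {s : seq O | uniq s && (size s == #|O|)}.
Definition plist (O : finType) (p : pref O) : seq O := proj1_sig p.

Definition strict_pref (O : finType) (p : pref O) (x y : O) : bool :=
  index x (plist p) < index y (plist p).
Definition weak_pref (O : finType) (p : pref O) (x y : O) : bool :=
  strict_pref p x y || (x == y).

Definition profile (A O : finType) := A -> pref O.
Definition allocation (A O : finType) := A -> O.
Definition rule (A O : finType) := profile A O -> allocation A O.

Definition individually_rational (A O : finType) (null : O) (phi : rule A O) : Prop :=
  forall (P : profile A O) (a : A), weak_pref (P a) (phi P a) null.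

(* P' \in L(P, mu): for each agent a, P'_a agrees with P_a on mu(a) and on
   everything above it (same objects, same order). *)
Definition lower_contour (A O : finType) (P : profile A O) (mu : allocation A O)
    (P' : profile A O) : Prop :=
  forall a : A,
    take (index (mu a) (plist (P a))).+1 (plist (P' a))
    = take (index (mu a) (plist (P a))).+1 (plist (P a)).

Definition monotonic_discoverability (A O : finType) (phi : rule A O) : Prop :=
  forall (mu : allocation A O) (P : profile A O),
    phi P = mu \/
    exists astar : A, forall P' : profile A O,
      lower_contour P mu P' -> phi P' astar <> mu astar.

Definition choice_history (O : finType) := seq ({set O} * O).
Definition collective_history (A O : finType) := A -> choice_history O.
Definition empty_history (A O : finType) : collective_history A O := fun _ => [::].
Definition menu_function (A O : finType) := collective_history A O -> A -> {set O}.

Definition is_menu_function (A O : finType) (S : menu_function A O) : Prop :=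
  (forall a : A, S (@empty_history A O) a != set0) /\
  (forall (h : collective_history A O) (a : A) (s : choice_history O)
          (M : {set O}) (w : O),
     h a = rcons s (M, w) -> S h a \subset M :\ w).

Definition straightforward_choice (O : finType) (null : O) (p : pref O) (M : {set O}) : O :=
  head null [seq x <- plist p | x \in M].

(* One period of the mechanism, all agents straightforward w.r.t. P.
   Agents with empty menus make no choice; if all menus are empty the
   history is unchanged (the procedure has stopped). *)
Definition mech_step (A O : finType) (null : O) (S : menu_function A O)
    (P : profile A O) (h : collective_history A O) : collective_history A O :=
  fun a => if S h a == set0 then h a
           else rcons (h a) (S h a, straightforward_choice null (P a) (S h a)).

Definition stopped (A O : finType) (S : menu_function A O) (h : collective_history A O) : Prop :=
  forall a : A, S h a = set0.

Definition last_choice (O : finType) (null : O) (s : choice_history O) : O :=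
  (last (set0, null) s).2.

Definition sequentializes (A O : finType) (null : O) (S : menu_function A O)
    (phi : rule A O) : Prop :=
  forall P : profile A O, exists k : nat,
    let h := iter k (mech_step null S P) (@empty_history A O) in
    stopped S h /\ forall a : A, last_choice null (h a) = phi P a.

From Stdlib Require Import Classical FunctionalExtensionality ClassicalEpsilon.
From mathcomp Require Import all_boot.
Set Implicit Arguments. Unset Strict Implicit. Unset Printing Implicit Defensive.

(* If S sequentializes phi, play S straightforwardly at P.  As long as every
   nonempty menu offers each agent something at least as good as mu(a), the
   play is the same at every P' in L(P, mu).  So either this holds throughout
   and phi(P') = phi(P) for all such P', or at the first step where some
   agent's menu lies entirely below mu(a), that agent's final object comes from
   this menu at every P' in L(P, mu), hence differs from mu(a).

   Conversely, under monotonic discoverability, let every agent first pick from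
   all of O; then, repeatedly, one agent whose current pick is refuted (no
   profile consistent with the history gives it to her under phi) picks again
   among the objects she has not picked yet.  Her pick at P is never refuted
   once it is phi_a(P), so every agent walks down her preference no further
   than phi_a(P) and the procedure stops.  When no pick is refuted,
   discoverability applied to the allocation of current picks forces it to be
   phi(P). *)

Section Preferences.
Variables (O : finType) (null : O).
Implicit Types (p q : pref O) (M : {set O}).

Lemma plist_uniq p : uniq (plist p).
Proof. by case: p => s /= /andP[]. Qed.

Lemma plist_size p : size (plist p) = #|O|.
Proof. by case: p => s /= /andP[_ /eqP]. Qed.

Lemma mem_plist p x : x \in plist p.
Proof.
have size_enum : size (enum O) <= size (plist p) by rewrite -cardE plist_size.
have [_ ->] := uniq_min_size (plist_uniq p) (fun y _ => mem_enum O y) size_enum.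
by rewrite mem_enum.
Qed.

Lemma index_plist_lt p x : index x (plist p) < size (plist p).
Proof. by rewrite index_mem mem_plist. Qed.

Lemma weak_pref_refl p x : weak_pref p x x.
Proof. by rewrite /weak_pref eqxx orbT. Qed.

Lemma straightforward_choice_in p M :
  M != set0 -> straightforward_choice null p M \in M.
Proof.
case/set0Pn => x xM; rewrite /straightforward_choice.
have : x \in [seq y <- plist p | y \in M] by rewrite mem_filter xM mem_plist.
case E: [seq y <- _ | _] => [|y l] //= _.
by have := mem_head y l; rewrite -E mem_filter => /andP[].
Qed.

Lemma straightforward_choice_top p q M m x :
  take (index m (plist p)).+1 (plist q) = take (index m (plist p)).+1 (plist p) ->
  x \in M -> weak_pref p x m ->
  straightforward_choice null q M = straightforward_choice null p M.
Proof.
move=> eq_top xM x_m; rewrite /straightforward_choice.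
set i := (index m (plist p)).+1.
rewrite -(cat_take_drop i (plist q)) -(cat_take_drop i (plist p)) !filter_cat eq_top.
suff : x \in [seq y <- take i (plist p) | y \in M] by case: [seq y <- _ | _].
rewrite mem_filter xM in_take ?mem_plist // ltnS /=.
by case/orP: x_m => [/ltnW | /eqP->].
Qed.

End Preferences.

Section Runs.
Variables (A O : finType) (null : O) (S : menu_function A O).
Implicit Types (P : profile A O) (h : collective_history A O).

Definition run P j := iter j (mech_step null S P) (@empty_history A O).

Lemma mech_step_stopped P h : stopped S h -> mech_step null S P h = h.
Proof.
move=> h_stop; apply: functional_extensionality => a.
by rewrite /mech_step h_stop eqxx.
Qed.

Lemma run_stopped_le P k j : stopped S (run P k) -> k <= j -> run P j = run P k.
Proof.
move=> stop_k /subnK <-; rewrite /run iterD -/(run P k).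
by elim: (j - k) => //= i ->; apply: mech_step_stopped.
Qed.

Hypothesis S_menu : is_menu_function S.

Lemma last_entry_mech_step P h a :
  let e := last (set0, null) (h a) in
  let e' := last (set0, null) (mech_step null S P h a) in
  e.2 \in e.1 -> e'.1 \subset e.1 /\ e'.2 \in e'.1.
Proof.
move=> e e'; rewrite {}/e' /mech_step; case: eqP => [_|/eqP menu_nonempty] e_in.
  by rewrite subxx.
rewrite last_rcons straightforward_choice_in //; split=> //.
case/lastP E: (h a) e_in => [|s [M w]]; rewrite /e E ?inE // last_rcons /= => _.
by apply: subset_trans (subD1set M w); apply: S_menu.2 E.
Qed.

Lemma last_choice_in_menu P j k a :
  S (run P j) a != set0 -> stopped S (run P k) ->
  last_choice null (run P k a) \in S (run P j) a.
Proof.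
move=> menu_nonempty stop_k.
have lt_jk : j < k.
  rewrite ltnNge; apply: contra menu_nonempty => le_kj.
  by rewrite (run_stopped_le stop_k le_kj) stop_k.
pose e i := last (set0, null) (run P (i + j).+1 a).
suff inv i : (e i).1 \subset S (run P j) a /\ (e i).2 \in (e i).1.
  have [sub_e in_e] := inv (k - j.+1).
  have <- : ((k - j.+1) + j).+1 = k by rewrite -addnS subnK.
  exact: (subsetP sub_e _ in_e).
elim: i => [|i [sub_i in_i]].
  rewrite /e /= /mech_step (negbTE menu_nonempty) last_rcons /=.
  by rewrite subxx straightforward_choice_in.
have [sub' in'] := last_entry_mech_step P in_i.
by split=> //; apply: subset_trans sub' sub_i.
Qed.
End Runs.

Section Sequentialized.
Variables (A O : finType) (null : O) (phi : rule A O) (S : menu_function A O).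
Hypotheses (S_menu : is_menu_function S) (S_seq : sequentializes null S phi).
Implicit Types (P : profile A O) (mu : allocation A O) (h : collective_history A O).

Lemma stopped_run_outcome P k a :
  stopped S (run null S P k) -> last_choice null (run null S P k a) = phi P a.
Proof.
move=> stop_k; have [k' [stop_k' outcome_k']] := S_seq P.
rewrite -(run_stopped_le stop_k (leq_maxl k k')).
by rewrite (run_stopped_le stop_k' (leq_maxr k k')) outcome_k'.
Qed.

Definition menus_offer P mu h : bool :=
  [forall a, (S h a != set0) ==> [exists x in S h a, weak_pref (P a) x (mu a)]].

Lemma run_lower_contour P P' mu j :
  (forall i, i < j -> menus_offer P mu (run null S P i)) ->
  lower_contour P mu P' -> run null S P' j = run null S P j.
Proof.
move=> offer P'_low; elim: j offer => [//|j IHj] offer /=.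
rewrite IHj => [|i lt_ij]; last by apply: offer; apply: ltnW.
apply: functional_extensionality => a.
rewrite /mech_step; case: eqP => // /eqP nonempty.
have /forallP/(_ a)/implyP/(_ nonempty)/exists_inP[x xM x_mu] := offer j (ltnSn j).
by rewrite (straightforward_choice_top null (P'_low a) xM x_mu).
Qed.

Lemma sequentializable_discoverable : monotonic_discoverability phi.
Proof.
move=> mu P.
have [/forallP phi_mu | /forallPn[a /eqP phi_a]] := boolP [forall a, phi P a == mu a].
  by left; apply: functional_extensionality => a; apply/eqP.
right; case: (classic (exists j, ~~ menus_offer P mu (run null S P j))) => [bad | good].
  have [j0 /forallPn[b]] := ex_minnP bad.
  rewrite negb_imply => /andP[nonempty /exists_inPn no_offer] min_j0.
  have mu_out : mu b \notin S (run null S P j0) b.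
    by apply/negP => /no_offer; rewrite weak_pref_refl.
  exists b => P' P'_low; have [k [stop_k outcome_k]] := S_seq P'.
  have same_j0 : run null S P' j0 = run null S P j0.
    apply: run_lower_contour P'_low => i; apply: contraTT => /min_j0; by rewrite -leqNgt.
  rewrite -outcome_k => eq_mu; move: mu_out; rewrite -eq_mu -same_j0.
  by rewrite last_choice_in_menu // same_j0.
exists a => P' P'_low; have [k [stop_k outcome_k]] := S_seq P'.
have same_k : run null S P' k = run null S P k.
  apply: run_lower_contour P'_low => i _; apply: contraT => bad; case: good; by exists i.
by rewrite -(outcome_k a) -/(run null S P' k) same_k stopped_run_outcome // -same_k.
Qed.

End Sequentialized.

Section TopHistory.
Variables (O : finType) (null : O).
Implicit Types (s : seq O) (p : pref O).

Definition top_history s n : choice_history O :=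
  [seq ([set x | x \notin take j s], nth null s j) | j <- iota 0 n].

Lemma size_top_history s n : size (top_history s n) = n.
Proof. by rewrite size_map size_iota. Qed.

Lemma top_history_choices s n : n <= size s -> map snd (top_history s n) = take n s.
Proof. by move=> le_ns; rewrite -map_comp map_nth_iota0. Qed.

Lemma top_historyS s n :
  top_history s n.+1 = rcons (top_history s n) ([set x | x \notin take n s], nth null s n).
Proof. by rewrite /top_history -addn1 iotaD map_cat cats1. Qed.

Lemma last_choice_top_history s n : last_choice null (top_history s n.+1) = nth null s n.
Proof. by rewrite /last_choice top_historyS last_rcons. Qed.

Lemma top_menuS s n : n < size s ->
  [set x | x \notin take n s] :\ nth null s n = [set x | x \notin take n.+1 s].
Proof.
by move=> lt_ns; apply/setP => x; rewrite !inE (take_nth null lt_ns) mem_rcons inE negb_or.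
Qed.

Lemma straightforward_choice_top_menu p n : n < size (plist p) ->
  straightforward_choice null p [set x | x \notin take n (plist p)] = nth null (plist p) n.
Proof.
move=> lt_n; rewrite /straightforward_choice; set top := take n (plist p).
have /and3P[_ disj _] :
    [&& uniq top, ~~ has [in top] (drop n (plist p)) & uniq (drop n (plist p))].
  by rewrite -cat_uniq cat_take_drop plist_uniq.
rewrite -{1}(cat_take_drop n (plist p)) filter_cat -/top.
have /eq_in_filter -> : {in top, [in [set x | x \notin top]] =1 pred0}.
  by move=> x x_top; rewrite inE x_top.
rewrite filter_pred0 /=.
have /all_filterP -> : all [in [set x | x \notin top]] (drop n (plist p)).
  apply/allP => x x_drop; rewrite inE.
  by apply: contra disj => x_top; apply/hasP; exists x.
by rewrite -nth0 nth_drop addn0.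
Qed.

End TopHistory.

Section Discovery.
Variables (A O : finType) (null : O) (phi : rule A O).
Implicit Types (P : profile A O) (h : collective_history A O).

(* The paper's consistency of P with h, for the histories produced by
   [discovery_menu], whose menus consist of all objects not picked yet. *)
Definition consistent h P :=
  forall b, take (size (h b)) (plist (P b)) = map snd (h b).

Definition refuted h a :=
  forall P, consistent h P -> phi P a <> last_choice null (h a).

Definition refutedb h a : bool :=
  if excluded_middle_informative (refuted h a) then true else false.

Lemma refutedP h a : reflect (refuted h a) (refutedb h a).
Proof. by rewrite /refutedb; case: excluded_middle_informative; constructor. Qed.

Definition discovery_menu : menu_function A O := fun h a =>
  if h a == [::] then setT
  else if [pick b | refutedb h b] == Some a then
    (last (set0, null) (h a)).1 :\ (last (set0, null) (h a)).2
  else set0.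

Lemma discovery_menu_wf : is_menu_function discovery_menu.
Proof.
split=> [a | h a s M w E].
  by rewrite /discovery_menu eqxx; apply/set0Pn; exists null.
rewrite /discovery_menu E last_rcons -size_eq0 size_rcons /=.
by case: ifP => _; rewrite ?sub0set.
Qed.

Section OnTrack.
Variable P : profile A O.

Definition on_track h := forall b,
  h b = top_history null (plist (P b)) (size (h b)) /\
  0 < size (h b) <= (index (phi P b) (plist (P b))).+1.

Lemma on_track_size h b : on_track h -> size (h b) <= size (plist (P b)).
Proof. by case/(_ b) => _ /andP[_ /leq_trans]; apply; apply: index_plist_lt. Qed.

Lemma on_track_last_choice h b : on_track h ->
  (index (last_choice null (h b)) (plist (P b))).+1 = size (h b).
Proof.
move=> track; case: (track b) (on_track_size b track).
set n := size (h b) => -> /andP[n_gt0 _].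
case: n n_gt0 => // n _ lt_n.
by rewrite last_choice_top_history index_uniq ?plist_uniq.
Qed.

Lemma on_track_consistent h P' : on_track h ->
  consistent h P' <-> lower_contour P (fun b => last_choice null (h b)) P'.
Proof.
move=> track.
have choices b : map snd (h b) = take (size (h b)) (plist (P b)).
  by have [E _] := track b; rewrite {1}E top_history_choices // on_track_size.
by split=> cons_h b; move: (cons_h b); rewrite on_track_last_choice // choices.
Qed.

Lemma on_track_consistent_self h : on_track h -> consistent h P.
Proof. by move=> track; apply/(on_track_consistent P track) => b. Qed.

Lemma on_track_nonempty h b : on_track h -> (h b == [::]) = false.
Proof. by case/(_ b) => _ /andP[n_gt0 _]; apply/negbTE; rewrite -size_eq0 -lt0n. Qed.

Lemma refuted_on_track_size h a : on_track h -> refuted h a ->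
  size (h a) <= index (phi P a) (plist (P a)).
Proof.
move=> track /(_ P (on_track_consistent_self track)) not_phi.
case: (track a) => _ /andP[_]; rewrite leq_eqVlt ltnS => /orP[/eqP phi_last|//].
case: not_phi; apply: (index_inj null (mem_plist (P a) _) (mem_plist (P a) _)).
by apply: succn_inj; rewrite -phi_last on_track_last_choice.
Qed.

Definition remaining h := \sum_b (#|O| - size (h b)).

Section RefutedStep.
Variables (h : collective_history A O) (a : A).
Hypotheses (track : on_track h) (pick_a : [pick b | refutedb h b] = Some a).

Let s := plist (P a).
Let n := size (h a).

Lemma pick_refuted_size : n <= index (phi P a) s.
Proof.
have /refutedP ref_a : refutedb h a by case: pickP pick_a => // x ? [<-].
exact: refuted_on_track_size track ref_a.
Qed.

Lemma pick_refuted_size_lt : n < size s.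
Proof. exact: leq_ltn_trans pick_refuted_size (index_plist_lt _ _). Qed.

Lemma discovery_menu_refuted : discovery_menu h a = [set x | x \notin take n s].
Proof.
rewrite /discovery_menu on_track_nonempty // pick_a eqxx.
have lt_ns := pick_refuted_size_lt; have [E /andP[n_gt0 _]] := track a.
rewrite -/n -/s in E n_gt0 lt_ns *; rewrite E.
by case: n n_gt0 lt_ns => // m _ lt_ms; rewrite top_historyS last_rcons top_menuS // ltnW.
Qed.

Lemma discovery_menu_other b : b != a -> discovery_menu h b = set0.
Proof.
move=> neq_ba; rewrite /discovery_menu on_track_nonempty // pick_a.
by case: eqP => // [[eq_ab]]; rewrite eq_ab eqxx in neq_ba.
Qed.

Let step := mech_step null discovery_menu P.

Lemma mech_step_refuted : step h a = top_history null s n.+1.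
Proof.
have phi_in : phi P a \in discovery_menu h a.
  by rewrite discovery_menu_refuted inE in_take ?mem_plist // -leqNgt pick_refuted_size.
rewrite /step /mech_step; case: eqP => [menu0|_]; first by rewrite menu0 inE in phi_in.
rewrite discovery_menu_refuted straightforward_choice_top_menu ?pick_refuted_size_lt //.
by rewrite top_historyS -/s -/n -(proj1 (track a)).
Qed.

Lemma mech_step_other b : b != a -> step h b = h b.
Proof. by move=> neq_ba; rewrite /step /mech_step discovery_menu_other ?eqxx. Qed.

Lemma on_track_mech_step : on_track (step h).
Proof.
move=> b; have [-> | neq_ba] := eqVneq b a.
  by rewrite mech_step_refuted size_top_history ltnS; split=> //; apply: pick_refuted_size.
by rewrite mech_step_other //; apply: track.
Qed.

Lemma remaining_mech_step : remaining (step h) < remaining h.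
Proof.
rewrite /remaining (bigD1 a) // [X in _ < X](bigD1 a) //=.
under eq_bigr => b neq_ba do rewrite mech_step_other //.
rewrite ltn_add2r mech_step_refuted size_top_history ltn_sub2l //.
by rewrite -(plist_size (P a)); apply: pick_refuted_size_lt.
Qed.

End RefutedStep.

Lemma on_track_start : on_track (mech_step null discovery_menu P (@empty_history A O)).
Proof.
move=> b; set s := plist (P b).
have top0 : [set x | x \notin take 0 s] = setT by apply/setP => x; rewrite !inE take0.
have -> : mech_step null discovery_menu P (@empty_history A O) b = top_history null s 1.
  rewrite /mech_step /discovery_menu eqxx -top0; case: eqP => [/setP/(_ null)|_].
    by rewrite top0 !inE.
  have lt_0s : 0 < size s := leq_ltn_trans (leq0n _) (index_plist_lt _ (phi P b)).
  by rewrite straightforward_choice_top_menu.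
by rewrite size_top_history.
Qed.

Section Termination.
Hypothesis phi_md : monotonic_discoverability phi.

Lemma unrefuted_stopped h : on_track h -> [pick b | refutedb h b] = None ->
  stopped discovery_menu h /\ forall b, last_choice null (h b) = phi P b.
Proof.
move=> track pick_none.
have unrefuted b : ~ refuted h b by move/refutedP; case: pickP pick_none => // ->.
case: (phi_md (fun b => last_choice null (h b)) P) => [phi_last | [b not_b]].
  by split=> [b | b]; rewrite ?phi_last // /discovery_menu on_track_nonempty // pick_none.
by case: (unrefuted b) => P' /(on_track_consistent P' track)/not_b.
Qed.

Lemma on_track_terminates m h : on_track h -> remaining h < m ->
  exists k, let h' := iter k (mech_step null discovery_menu P) h in
    stopped discovery_menu h' /\ forall b, last_choice null (h' b) = phi P b.
Proof.
elim: m h => [|m IHm] h track; first by rewrite ltn0.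
rewrite ltnS => le_m; case pick_h: [pick b | refutedb h b] => [a|]; last first.
  by exists 0; apply: unrefuted_stopped.
have [k outcome] := IHm _ (on_track_mech_step track pick_h)
  (leq_trans (remaining_mech_step track pick_h) le_m).
by exists k.+1; rewrite iterSr.
Qed.

End Termination.
End OnTrack.

Lemma discoverable_sequentializable :
  monotonic_discoverability phi -> sequentializes null discovery_menu phi.
Proof.
move=> phi_md P.
have [k outcome] := on_track_terminates phi_md (on_track_start P) (ltnSn _).
by exists k.+1; rewrite iterSr.
Qed.

End Discovery.

Theorem theorem1 (A O : finType) (null : O) (phi : rule A O) :
  individually_rational null phi ->
  ((exists S : menu_function A O, is_menu_function S /\ sequentializes null S phi)
   <-> monotonic_discoverability phi).
Proof.
move=> _; split=> [[S [S_menu S_seq]] | phi_md].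
  exact: sequentializable_discoverable S_menu S_seq.
exists (discovery_menu null phi); split; first exact: discovery_menu_wf.
exact: discoverable_sequentializable.
Qed.
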